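(* Let $\mathbb Y^{(\mathcal K)}$ be the stationary Markov chain on $I^2\times\{0,1\}$ with transition matrix $\mathcal K$ and stationary law $\zeta$, and $\mathbb Y^{(\mathcal A)}$ the stationary Markov chain on $I^2\times\mathcal E^*$ with transition matrix $\mathcal A$ and stationary law $\eta$. Then $$h(\mathbb Y^{(\mathcal A)})=h(\mathbb Y^{(\mathcal K)})+\sum_{i\in I}\mu(i)P(i,\mathcal E)H(D^i),\qquad H(D^i)=-\sum_{\delta\in\mathcal E}\frac{P(i,\delta)}{P(i,\mathcal E)}\log\frac{P(i,\delta)}{P(i,\mathcal E)},$$ and $$h(\mathbb Y^{(\mathcal A)})=-(1-\gamma)\sum_{j\in I}\mu(j)\log\mu(j)-\sum_{i,j\in I}\mu(i)P(i,j)\log P(i,j)-\sum_{i\in I,\delta\in\mathcal E}\mu(i)P(i,\delta)\log P(i,\delta).$$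
   Context: $I$ and $\mathcal E$ are disjoint countable sets, $\mathcal E\ne\emptyset$; $P$ is a stochastic matrix on $I\cup\mathcal E$ with all $\epsilon\in\mathcal E$ absorbing, irreducible restriction $P_I$ to $I$, $\sum_{i\in I}P(i,\mathcal E)>0$ where $P(i,\mathcal E)=\sum_{\epsilon\in\mathcal E}P(i,\epsilon)$, and $\mathcal E$ reached a.s. from every $i\in I$. $\mu$ is a quasi-stationary distribution of $P_I$: a probability on $I$ with $\mu^tP_I=\gamma\mu^t$, $\gamma=\sum_{i,j\in I}\mu(i)P(i,j)\in(0,1)$. Terms with $P(i,\mathcal E)=0$ contribute $0$. The matrix $\mathcal K$ on $I^2\times\{0,1\}$: $\mathcal K((i,j,a),(l,k,b))=0$ if $l\ne j$, and $\mathcal K((i,j,a),(j,k,b))=P(j,k)\mathbf 1(b=1)+P(j,\mathcal E)\mu(k)\mathbf 1(b=0)$; stationary law $\zeta(i,j,a)=\mu(i)P(i,j)\mathbf 1(a=1)+\mu(i)P(i,\mathcal E)\mu(j)\mathbf 1(a=0)$. Let $\mathcal E^*=\mathcal E\cup\{o\}$ with $o\notin I\cup\mathcal E$. The matrix $\mathcal A$ on $I^2\times\mathcal E^*$: $\mathcal A((i,j,\delta),(l,k,\epsilon))=0$ if $l\neq j$, $=P(j,k)$ if $l=j,\epsilon=o$, and $=P(j,\epsilon)\mu(k)$ if $l=j,\epsilon\in\mathcal E$; stationary law $\eta(i,j,\delta)=\mu(i)P(i,j)\mathbf 1(\delta=o)+\mu(i)P(i,\delta)\mu(j)\mathbf 1(\delta\in\mathcal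 E)$. For a stationary Markov chain $\mathbb Z$ with transition matrix $R$ and stationary law $\nu$, $h(\mathbb Z)=-\sum_a\nu(a)\sum_bR(a,b)\log R(a,b)$ (with $0\log 0=0$). *)

From HB Require Import structures.
From mathcomp Require Import all_boot all_order all_algebra.
From mathcomp Require Import all_classical all_reals all_analysis.
Set Implicit Arguments. Unset Strict Implicit. Unset Printing Implicit Defensive.
Import Order.TTheory GRing.Theory Num.Theory.
Local Open Scope ring_scope.
Local Open Scope ereal_scope.
Local Open Scope classical_set_scope.

Section Defs.
Context {R : realType} {I E : countType}.
(* The state space I ∪ E (disjoint) is the sum type I + E. *)
Variable P : I + E -> I + E -> R.

Definition PE (i : I) : R := fine (\esum_(e in [set: E]) (P (inl i) (inr e))%:E).

Definition stochastic : Prop :=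
  (forall x y, (0 <= P x y)%R) /\ (forall x, \esum_(y in [set: I + E]) (P x y)%:E = 1).

Definition absorbing_E : Prop := forall e : E, P (inr e) (inr e) = 1%R.

Definition irreducible_I : Prop :=
  forall i j : I, exists s : seq I,
    path (fun a b => (0 < P (inl a) (inl b))%R) i s && (last i s == j).

(* survival probability P_i(X_1,...,X_n in I) = sum_j P_I^n(i,j) *)
Fixpoint surv (n : nat) (i : I) : \bar R :=
  match n with
  | 0%N => 1
  | n'.+1 => \esum_(j in [set: I]) ((P (inl i) (inl j))%:E * surv n' j)
  end.

(* E is reached a.s. from every i in I *)
Definition reaches_E_as : Prop := forall i : I, (fun n => surv n i) @ \oo --> 0.

Variable mu : I -> R.

Definition prob_on_I : Prop :=
  (forall i, (0 <= mu i)%R) /\ \esum_(i in [set: I]) (mu i)%:E = 1.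

Definition gamma_eq (g : R) : Prop :=
  g%:E = \esum_(i in [set: I]) \esum_(j in [set: I]) (mu i * P (inl i) (inl j))%:E.

Definition qsd_eq (g : R) : Prop :=
  forall j : I, \esum_(i in [set: I]) (mu i * P (inl i) (inl j))%:E = (g * mu j)%:E.

(* Matrix K on I^2 x {0,1} (bool: true = 1, false = 0) *)
Definition Kmat (x y : I * I * bool) : R :=
  let: (_, j, _) := x in
  let: (l, k, b) := y in
  if l == j then (if b then P (inl j) (inl k) : R else (PE j * mu k)%R) else 0%R.

Definition zeta_law (x : I * I * bool) : R :=
  let: (i, j, a) := x in
  if a then (mu i * P (inl i) (inl j))%R else (mu i * PE i * mu j)%R.

(* E* = E ∪ {o} is option E, with o = None *)
Definition Amat (x y : I * I * option E) : R :=
  let: (_, j, _) := x in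
  let: (l, k, eps) := y in
  if l == j then
    match eps with
    | None => P (inl j) (inl k)
    | Some e => (P (inl j) (inr e) * mu k)%R
    end
  else 0%R.

Definition eta_law (x : I * I * option E) : R :=
  let: (i, j, d) := x in
  match d with
  | None => (mu i * P (inl i) (inl j))%R
  | Some e => (mu i * P (inl i) (inr e) * mu j)%R
  end.

Definition HD (i : I) : \bar R :=
  \esum_(d in [set: E])
    (- ((P (inl i) (inr d) / PE i) * ln (P (inl i) (inr d) / PE i)))%:E.

End Defs.

(* entropy rate h(Z) = - sum_a nu(a) sum_b R(a,b) log R(a,b), with 0 log 0 = 0
   (ln 0 = 0 in MathComp-Analysis); all summands are nonnegative, so the
   sums are taken in [0, +oo] *)
Definition entropy_rate {R : realType} {T : choiceType} (nu : T -> R)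
    (Rm : T -> T -> R) : \bar R :=
  \esum_(a in [set: T]) ((nu a)%:E *
     \esum_(b in [set: T]) (- (Rm a b * ln (Rm a b)))%:E).

(* Both K and A forget the first coordinate of the state and shift the second
   one, j, to the front, so each entropy rate is the average, under the
   j-marginal of its stationary law, of the entropy of the row out of j.  By
   mu^t P_I = gamma mu^t and sum_i mu(i) P(i,E) = 1 - gamma this marginal is mu
   for both zeta and eta.  The A-row out of j refines the K-row by splitting the
   killing mass P(j,E) according to the exit state, so by the grouping property
   of entropy it carries P(j,E) H(D^j) more entropy; expanding
   -xy log xy = -y x log x - x y log y in the A-row gives the explicit formula. *)

From HB Require Import structures.
From mathcomp Require Import all_boot all_order all_algebra.
From mathcomp Require Import all_classical all_reals all_analysis.
From mathcomp Require Import ring.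
Import Order.TTheory GRing.Theory Num.Theory.
Local Open Scope ring_scope.

(* As [ln 0 = 0], this gives the convention [0 log 0 = 0]. *)
Local Notation ent x := (- (x * ln x))%R.

Section Entropy.
Context {R : realType}.
Implicit Types x y q s : R.

Lemma ent_ge0 x : 0 <= x -> x <= 1 -> 0 <= ent x.
Proof. by move=> x0 x1; rewrite oppr_ge0 mulr_ge0_le0 // ln_le0. Qed.

Lemma entM x y : 0 <= x -> 0 <= y -> ent (x * y) = y * ent x + x * ent y.
Proof.
rewrite le_eqVlt => /predU1P[<- _|x0]; first by rewrite !mul0r; ring.
rewrite le_eqVlt => /predU1P[<-|y0]; first by rewrite !mulr0 !mul0r; ring.
by rewrite lnM ?posrE //; ring.
Qed.

Lemma ent_group q s : 0 <= q -> q <= s -> ent q = - (q * ln s) + s * ent (q / s).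
Proof.
rewrite le_eqVlt => /predU1P[<- _|q0 qs]; first by rewrite !mul0r; ring.
have s0 : 0 < s by apply: lt_le_trans qs.
rewrite ln_div ?posrE // mulrN mulrA [s * _]mulrC divfK ?gt_eqF //; ring.
Qed.

Lemma divr_le1 q s : 0 <= q -> q <= s -> q / s <= 1.
Proof.
move=> q0 qs; have [->|s0] := eqVneq s 0; first by rewrite invr0 mulr0.
by rewrite ler_pdivrMr ?mul1r // lt_def s0 (le_trans q0 qs).
Qed.

End Entropy.

Local Open Scope ereal_scope.
Local Open Scope classical_set_scope.

Section ExtendedSums.
Context {R : realType}.
Implicit Types T A B : choiceType.

Lemma le_term_esum T (S : set T) (a : T -> \bar R) t :
  (forall x, S x -> 0 <= a x) -> S t -> a t <= \esum_(x in S) a x.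
Proof.
move=> a0 St; apply: esum_ge; exists [set t]; last by rewrite fsbig_set1.
by split; [exact: finite_set1 | move=> x ->].
Qed.

Lemma ge0_esumZl T (S : set T) (c : \bar R) (a : T -> \bar R) :
  0 <= c -> (forall x, 0 <= a x) ->
  \esum_(x in S) (c * a x) = c * \esum_(x in S) a x.
Proof.
case: c => [r||//] c0 a0.
  rewrite /esum -ereal_supZl //; last first.
    by apply/set0P; exists 0, set0; [exact: fsets_set0 | rewrite fsbig_set0].
  rewrite image_comp; congr ereal_sup; apply: eq_imagel => X _ /=.
  by rewrite ge0_mule_fsumr.
have [sa0|] := eqVneq (\esum_(x in S) a x) 0.
  rewrite sa0 mule0; apply: esum1 => x Sx; apply/eqP; rewrite mule_eq0 orbC.
  by rewrite eq_le a0 -sa0 le_term_esum.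
rewrite neq_lt ltNge esum_ge0 //= => sa_gt0; rewrite gt0_mulye //.
have [x Sx ax0] : exists2 x, S x & 0 < a x.
  apply: contrapT => no_pos; move: sa_gt0; rewrite esum1 ?ltxx // => x Sx.
  apply/eqP; rewrite eq_le a0 andbT leNgt; apply/negP => ax0.
  by apply: no_pos; exists x.
apply/eqP; rewrite eq_le leey /= -[leLHS](gt0_mulye ax0).
by apply: le_term_esum => // y _; rewrite mule_ge0.
Qed.

Lemma ge0_esumZr T (S : set T) (c : \bar R) (a : T -> \bar R) :
  0 <= c -> (forall x, 0 <= a x) ->
  \esum_(x in S) (a x * c) = (\esum_(x in S) a x) * c.
Proof.
by move=> c0 a0; rewrite muleC -ge0_esumZl //; apply: eq_esum => x _; rewrite muleC.
Qed.

Lemma esum_prod A B (F : A * B -> \bar R) : (forall t, 0 <= F t) ->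
  \esum_(t in [set: A * B]) F t = \esum_(a in [set: A]) \esum_(b in [set: B]) F (a, b).
Proof.
move=> F0; rewrite esum_esum //.
have -> : [set: A] `*`` (fun=> [set: B]) = [set: A * B] by apply/seteqP; split.
by apply: eq_esum => -[].
Qed.

Lemma esum_swap A B (F : A -> B -> \bar R) : (forall a b, 0 <= F a b) ->
  \esum_(a in [set: A]) \esum_(b in [set: B]) F a b =
  \esum_(b in [set: B]) \esum_(a in [set: A]) F a b.
Proof.
move=> F0; rewrite -(@esum_prod _ _ (fun t => F t.1 t.2)) //.
rewrite -(@esum_prod _ _ (fun t => F t.2 t.1)) //.
rewrite (reindex_esum setT setT (fun t => (t.2, t.1))) //.
by split=> [//|[? ?] [? ?] _ _ [-> ->]//|[a b] _]; exists (b, a).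
Qed.

Lemma esum_sumType A B (F : A + B -> \bar R) : (forall x, 0 <= F x) ->
  \esum_(x in [set: A + B]) F x =
  \esum_(a in [set: A]) F (inl a) + \esum_(b in [set: B]) F (inr b).
Proof.
move=> F0; rewrite (esumID (range inl)) // !setTI.
have -> : ~` range inl = range (@inr A B).
  by apply/seteqP; split=> [[a /(_ (ex_intro2 _ _ a I erefl))|b _]|_ [b _ <-] [a _]].
by rewrite !esum_image // => x y _ _ [].
Qed.

Lemma esum_option T (F : option T -> \bar R) : (forall x, 0 <= F x) ->
  \esum_(x in [set: option T]) F x = F None + \esum_(t in [set: T]) F (Some t).
Proof.
move=> F0; rewrite (esumID [set None]) // setTI esum_set1 //.
have -> : [set: option T] `&` ~` [set None] = range Some.
  apply/seteqP; split=> [x [_ xN]|_ [t _ <-]//].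
  by case: x xN => [t _|/(_ erefl)//]; exists t.
by rewrite esum_image // => x y _ _ [].
Qed.

Lemma esum_bool (F : bool -> \bar R) : (forall b, 0 <= F b) ->
  \esum_(b in [set: bool]) F b = F true + F false.
Proof.
move=> F0; rewrite (esumID [set true]) // setTI esum_set1 //.
have -> : [set: bool] `&` ~` [set true] = [set false]
  by apply/seteqP; split=> -[] //= [_ /(_ erefl)].
by rewrite esum_set1.
Qed.

End ExtendedSums.

Section EntropySums.
Context {R : realType}.

Lemma esum_ent_group (T : choiceType) (q : T -> R) (s : R) :
  (forall t, 0 <= q t)%R -> s%:E = \esum_(t in [set: T]) (q t)%:E -> (s <= 1)%R ->
  \esum_(t in [set: T]) (ent (q t))%:E
    = (ent s)%:E + s%:E * \esum_(t in [set: T]) (ent (q t / s))%:E.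
Proof.
move=> q0 sE s1.
have q_le_s t : (q t <= s)%R.
  by rewrite -lee_fin sE; apply: le_term_esum => // x _; rewrite lee_fin.
have s0 : (0 <= s)%R by rewrite -lee_fin sE esum_ge0 // => t _; rewrite lee_fin.
have lns0 : (0 <= - ln s)%R by rewrite oppr_ge0 ln_le0.
have ent_q0 t : (0 <= ent (q t / s))%R by rewrite ent_ge0 ?divr_le1 ?divr_ge0.
rewrite (eq_esum (b := fun t => (- ln s)%:E * (q t)%:E + s%:E * (ent (q t / s))%:E)).
  rewrite esumD; last 2 first.
  - by move=> t _; rewrite mule_ge0 ?lee_fin.
  - by move=> t _; rewrite mule_ge0 ?lee_fin.
  by rewrite !ge0_esumZl ?lee_fin // -sE -EFinM mulNr mulrC.
by move=> t _; rewrite -!EFinM -EFinD (ent_group _ _ (q0 t) (q_le_s t)) mulrN mulNr mulrC.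
Qed.

End EntropySums.

Lemma entropy_rate_forget {R : realType} {I X : choiceType}
    (w : I * I * X -> R) (nu : I -> R)
    (M : I * I * X -> I * I * X -> R) (m : I -> I -> X -> R) :
  (forall t, 0 <= w t)%R -> (forall j k b, 0 <= ent (m j k b))%R ->
  (forall i j a l k b, M (i, j, a) (l, k, b) = if l == j then m j k b else 0%R) ->
  (forall j, \esum_(i in [set: I]) \esum_(a in [set: X]) (w (i, j, a))%:E = (nu j)%:E) ->
  entropy_rate w M = \esum_(j in [set: I])
    ((nu j)%:E * \esum_(k in [set: I]) \esum_(b in [set: X]) (ent (m j k b))%:E).
Proof.
move=> w0 ent_m0 ME w_marg.
set S := fun j => \esum_(k in [set: I]) \esum_(b in [set: X]) (ent (m j k b))%:E.
have S0 j : 0 <= S j by apply: esum_ge0 => k _; apply: esum_ge0 => b _; rewrite lee_fin.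
have ent_M0 x y : 0 <= (ent (M x y))%:E.
  case: x y => [[i j] a] [[l k] b]; rewrite ME lee_fin.
  by case: eqP => // _; rewrite mul0r oppr0.
have row_ent i j a : \esum_(y in [set: I * I * X]) (ent (M (i, j, a) y))%:E = S j.
  rewrite esum_prod // esum_prod => [|t]; last by apply: esum_ge0.
  rewrite (esumID [set j]) => [|l _]; last by apply: esum_ge0 => k _; apply: esum_ge0.
  rewrite setTI esum_set1; last by apply: esum_ge0 => k _; apply: esum_ge0.
  rewrite [X in _ + X]esum1 ?adde0 => [|l [_ /eqP lj]]; last first.
    by apply: esum1 => k _; apply: esum1 => b _; rewrite ME (negbTE lj) mul0r oppr0.
  by apply: eq_esum => k _; apply: eq_esum => b _; rewrite ME eqxx.
rewrite /entropy_rate (eq_esum (b := fun t => (w t)%:E * S t.1.2)); last first.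
  by move=> [[i j] a] _; rewrite row_ent.
have wS0 t : 0 <= (w t)%:E * S t.1.2 by rewrite mule_ge0 ?lee_fin.
rewrite esum_prod // esum_prod => [|t]; last by apply: esum_ge0.
rewrite esum_swap => [|i j]; last by apply: esum_ge0.
apply: eq_esum => j _ /=.
rewrite (eq_esum (b := fun i => (\esum_(a in [set: X]) (w (i, j, a))%:E) * S j)).
  by rewrite ge0_esumZr // => [|i]; [rewrite w_marg | apply: esum_ge0 => a _; rewrite lee_fin].
by move=> i _; rewrite ge0_esumZr // => a; rewrite lee_fin.
Qed.

Section QuasiStationaryChains.
Context {R : realType} {I E : countType}.
Variables (P : I + E -> I + E -> R) (mu : I -> R) (gamma : R).
Hypotheses (HP : stochastic P) (Hmu : prob_on_I mu).
Hypotheses (gammaE : gamma_eq P mu gamma) (mu_qsd : qsd_eq P mu gamma).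

Let P_ge0 : forall x y, (0 <= P x y)%R := proj1 HP.
Let mu_ge0 : forall i, (0 <= mu i)%R := proj1 Hmu.

Lemma P_le1 x y : (P x y <= 1)%R.
Proof.
rewrite -lee_fin -(proj2 HP x).
by apply: le_term_esum => // z _; rewrite lee_fin.
Qed.

Lemma mu_le1 i : (mu i <= 1)%R.
Proof.
rewrite -lee_fin -(proj2 Hmu).
by apply: le_term_esum => // z _; rewrite lee_fin.
Qed.

Lemma esum_row_split i : \esum_(k in [set: I]) (P (inl i) (inl k))%:E
  + \esum_(e in [set: E]) (P (inl i) (inr e))%:E = 1.
Proof. by rewrite -(proj2 HP (inl i)) [RHS]esum_sumType // => y; rewrite lee_fin. Qed.

Lemma PE_esum i : (PE P i)%:E = \esum_(e in [set: E]) (P (inl i) (inr e))%:E.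
Proof.
have killed0 : 0 <= \esum_(e in [set: E]) (P (inl i) (inr e))%:E.
  by apply: esum_ge0 => e _; rewrite lee_fin.
have killed1 : \esum_(e in [set: E]) (P (inl i) (inr e))%:E <= 1.
  by rewrite -(esum_row_split i) leeDr // esum_ge0 // => k _; rewrite lee_fin.
by rewrite fineK // ge0_fin_numE // (le_lt_trans killed1) ?ltry.
Qed.

Lemma esum_row_PE i : \esum_(k in [set: I]) (P (inl i) (inl k))%:E + (PE P i)%:E = 1.
Proof. by rewrite PE_esum esum_row_split. Qed.

Lemma PE_ge0 i : (0 <= PE P i)%R.
Proof. by rewrite -lee_fin PE_esum esum_ge0 // => e _; rewrite lee_fin. Qed.

Lemma PE_le1 i : (PE P i <= 1)%R.
Proof.
by rewrite -lee_fin PE_esum -(esum_row_split i) leeDr // esum_ge0 // => k _; rewrite lee_fin.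
Qed.

Lemma HD_ge0 j : 0 <= HD P j.
Proof.
have P_le_PE e : (P (inl j) (inr e) <= PE P j)%R.
  by rewrite -lee_fin PE_esum; apply: le_term_esum => // e' _; rewrite lee_fin.
by apply: esum_ge0 => e _; rewrite lee_fin ent_ge0 ?divr_ge0 ?divr_le1 ?PE_ge0.
Qed.

Local Ltac ge0 := repeat first
  [ move=> ?
  | progress rewrite ?lee_fin
  | lazymatch goal with |- is_true (_ <= HD _ _) => exact: HD_ge0 end
  | apply: esum_ge0 => ? _
  | apply: adde_ge0 | apply: addr_ge0 | apply: mule_ge0 | apply: mulr_ge0 | apply: ent_ge0
  | apply: mulr_ile1
  | exact: P_ge0 | exact: mu_ge0 | exact: PE_ge0
  | exact: P_le1 | exact: mu_le1 | exact: PE_le1 ].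

Lemma esum_mu_PE : \esum_(i in [set: I]) (mu i * PE P i)%:E = (1 - gamma)%:E.
Proof.
have : gamma%:E + \esum_(i in [set: I]) (mu i * PE P i)%:E = 1.
  rewrite -(proj2 Hmu) gammaE -esumD; [|by move=> *; ge0|by move=> *; ge0].
  apply: eq_esum => i _.
  under eq_esum do rewrite EFinM.
  by rewrite ge0_esumZl ?EFinM -?ge0_muleDr ?esum_row_PE ?mule1 //; ge0.
move: (\esum_(i in [set: I]) (mu i * PE P i)%:E) => [r| |]; rewrite ?addey ?addeNy //.
by rewrite -EFinD => -[<-]; rewrite addrC addKr.
Qed.

Lemma gamma_le1 : (gamma <= 1)%R.
Proof. by rewrite -subr_ge0 -lee_fin -esum_mu_PE; ge0. Qed.

Lemma mu_balance j : \esum_(i in [set: I])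
  ((mu i * P (inl i) (inl j))%:E + (mu i * PE P i * mu j)%:E) = (mu j)%:E.
Proof.
rewrite esumD; [|by ge0|by ge0].
under [X in _ + X]eq_esum do rewrite EFinM.
rewrite mu_qsd ge0_esumZr ?esum_mu_PE; [|by ge0|by ge0].
by rewrite -EFinM -EFinD; congr _%:E; ring.
Qed.

(* [Kmat (i, j, a) (l, k, b) = if l == j then Krow j k b else 0], and likewise
   for [Amat] and [Arow]. *)
Definition Krow (j k : I) (b : bool) : R :=
  if b then P (inl j) (inl k) else (PE P j * mu k)%R.

Definition Arow (j k : I) (d : option E) : R :=
  if d is Some e then (P (inl j) (inr e) * mu k)%R else P (inl j) (inl k).

Lemma zeta_marginal j :
  \esum_(i in [set: I]) \esum_(b in [set: bool]) (zeta_law P mu (i, j, b))%:E = (mu j)%:E.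
Proof. by rewrite -mu_balance; apply: eq_esum => i _; rewrite esum_bool // => -[] /=; ge0. Qed.

Lemma eta_marginal j :
  \esum_(i in [set: I]) \esum_(d in [set: option E]) (eta_law P mu (i, j, d))%:E
  = (mu j)%:E.
Proof.
rewrite -mu_balance; apply: eq_esum => i _; rewrite esum_option => [|[e|] /=]; [|by ge0..].
congr (_ + _); rewrite mulrAC EFinM PE_esum -ge0_esumZl ?lee_fin; [|by ge0|by ge0].
by apply: eq_esum => e _; rewrite -EFinM /=; congr _%:E; ring.
Qed.

Lemma esum_ent_mu_PE j : \esum_(k in [set: I]) (PE P j * ent (mu k))%:E
  = (PE P j)%:E * \esum_(k in [set: I]) (ent (mu k))%:E.
Proof. by under eq_esum do rewrite EFinM; rewrite ge0_esumZl //; ge0. Qed.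

Lemma esum_mu_scale (x : \bar R) : 0 <= x -> \esum_(k in [set: I]) ((mu k)%:E * x) = x.
Proof. by move=> x0; rewrite ge0_esumZr ?(proj2 Hmu) ?mul1e //; ge0. Qed.

Lemma Krow_entropy j :
  \esum_(k in [set: I]) \esum_(b in [set: bool]) (ent (Krow j k b))%:E
  = \esum_(k in [set: I]) (ent (P (inl j) (inl k)))%:E + (ent (PE P j))%:E
    + (PE P j)%:E * \esum_(k in [set: I]) (ent (mu k))%:E.
Proof.
rewrite (eq_esum (b := fun k => (ent (P (inl j) (inl k)))%:E
  + ((mu k)%:E * (ent (PE P j))%:E + (PE P j * ent (mu k))%:E))); last first.
  move=> k _; rewrite esum_bool => [|[]]; [|by rewrite /Krow; ge0..].
  by rewrite /Krow /= entM ?EFinD ?EFinM //; ge0.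
rewrite esumD; [|by ge0|by ge0].
by rewrite esumD ?esum_mu_scale ?esum_ent_mu_PE ?addeA; ge0.
Qed.

Lemma Arow_entropy j :
  \esum_(k in [set: I]) \esum_(d in [set: option E]) (ent (Arow j k d))%:E
  = \esum_(k in [set: I]) (ent (P (inl j) (inl k)))%:E
    + \esum_(e in [set: E]) (ent (P (inl j) (inr e)))%:E
    + (PE P j)%:E * \esum_(k in [set: I]) (ent (mu k))%:E.
Proof.
rewrite (eq_esum (b := fun k => (ent (P (inl j) (inl k)))%:E
  + ((mu k)%:E * (\esum_(e in [set: E]) (ent (P (inl j) (inr e)))%:E)
     + (PE P j * ent (mu k))%:E))); last first.
  move=> k _; rewrite esum_option => [|[e|]]; [|by rewrite /Arow /=; ge0..].
  congr (_ + _); rewrite /Arow /=.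
  under eq_esum do rewrite (entM _ _ (P_ge0 _ _) (mu_ge0 k)) EFinD.
  rewrite esumD; [|by ge0|by ge0].
  under [X in X + _ = _]eq_esum do rewrite EFinM.
  under [X in _ + X = _]eq_esum do rewrite EFinM.
  rewrite ge0_esumZl ?ge0_esumZr -?PE_esum -?EFinM //; ge0.
rewrite esumD; [|by ge0|by ge0].
by rewrite esumD ?esum_mu_scale ?esum_ent_mu_PE ?addeA; ge0.
Qed.

Lemma exit_entropy_group j : \esum_(e in [set: E]) (ent (P (inl j) (inr e)))%:E
  = (ent (PE P j))%:E + (PE P j)%:E * HD P j.
Proof. by apply: esum_ent_group => [e||]; [exact: P_ge0 | exact: PE_esum | exact: PE_le1]. Qed.

Lemma entropy_rate_Kmat : entropy_rate (zeta_law P mu) (Kmat P mu)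
  = \esum_(j in [set: I])
      ((mu j)%:E * \esum_(k in [set: I]) \esum_(b in [set: bool]) (ent (Krow j k b))%:E).
Proof.
apply: entropy_rate_forget => //; last exact: zeta_marginal.
- by move=> [[i j] []] /=; ge0.
- by move=> j k [] /=; ge0.
Qed.

Lemma entropy_rate_Amat : entropy_rate (eta_law P mu) (Amat P mu)
  = \esum_(j in [set: I])
      ((mu j)%:E * \esum_(k in [set: I]) \esum_(d in [set: option E]) (ent (Arow j k d))%:E).
Proof.
apply: entropy_rate_forget => //; last exact: eta_marginal.
- by move=> [[i j] [e|]] /=; ge0.
- by move=> j k [e|] /=; ge0.
Qed.

Lemma entropy_rate_Amat_Kmat : entropy_rate (eta_law P mu) (Amat P mu)
  = entropy_rate (zeta_law P mu) (Kmat P mu)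
    + \esum_(i in [set: I]) ((mu i * PE P i)%:E * HD P i).
Proof.
rewrite entropy_rate_Amat entropy_rate_Kmat.
under eq_esum do rewrite Arow_entropy exit_entropy_group.
under [in RHS]eq_esum do rewrite Krow_entropy.
rewrite -esumD; [|by ge0|by ge0].
apply: eq_esum => j _; rewrite EFinM -muleA -ge0_muleDr; [|by ge0|by ge0].
by rewrite addeA addeAC.
Qed.

Lemma entropy_rate_Amat_explicit : entropy_rate (eta_law P mu) (Amat P mu)
  = \esum_(j in [set: I]) (- ((1 - gamma) * (mu j * ln (mu j))))%:E
    + \esum_(i in [set: I]) \esum_(j in [set: I])
        (- (mu i * (P (inl i) (inl j) * ln (P (inl i) (inl j)))))%:E
    + \esum_(i in [set: I]) \esum_(d in [set: E])
        (- (mu i * (P (inl i) (inr d) * ln (P (inl i) (inr d)))))%:E.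
Proof.
have mu_esum (T : choiceType) (f : I -> T -> R) : (forall j t, 0 <= f j t)%R ->
    \esum_(j in [set: I]) ((mu j)%:E * \esum_(t in [set: T]) (f j t)%:E)
    = \esum_(j in [set: I]) \esum_(t in [set: T]) (mu j * f j t)%:E.
  move=> f0; apply: eq_esum => j _; rewrite -ge0_esumZl; [|by ge0|by ge0].
  by apply: eq_esum => t _; rewrite EFinM.
rewrite entropy_rate_Amat.
rewrite (eq_esum (b := fun j =>
    (mu j)%:E * (\esum_(k in [set: I]) (ent (P (inl j) (inl k)))%:E)
  + (mu j)%:E * (\esum_(e in [set: E]) (ent (P (inl j) (inr e)))%:E)
  + (mu j * PE P j)%:E * (\esum_(k in [set: I]) (ent (mu k))%:E))); last first.
  by move=> j _; rewrite Arow_entropy !ge0_muleDr ?EFinM ?muleA //; ge0.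
rewrite esumD; [|by ge0|by ge0].
rewrite esumD; [|by ge0|by ge0].
rewrite ge0_esumZr ?esum_mu_PE; [|by ge0|by ge0].
rewrite -ge0_esumZl; [|by rewrite lee_fin subr_ge0 gamma_le1|by ge0].
rewrite (mu_esum _ (fun j k => ent (P (inl j) (inl k)))); last by ge0.
rewrite (mu_esum _ (fun j e => ent (P (inl j) (inr e)))); last by ge0.
rewrite addeC addeA.
congr (_ + _ + _); apply: eq_esum => i _; first by rewrite -EFinM mulrN.
all: by apply: eq_esum => k _; rewrite mulrN.
Qed.

End QuasiStationaryChains.

Theorem proposition4 (R : realType) (I E : countType)
  (P : I + E -> I + E -> R) (mu : I -> R) (gamma : R) :
  (exists e : E, True) ->
  stochastic P ->
  absorbing_E P ->
  irreducible_I P ->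
  0 < \esum_(i in [set: I]) (PE P i)%:E ->
  reaches_E_as P ->
  prob_on_I mu ->
  gamma_eq P mu gamma ->
  (0 < gamma < 1)%R ->
  qsd_eq P mu gamma ->
  entropy_rate (eta_law P mu) (Amat P mu)
    = entropy_rate (zeta_law P mu) (Kmat P mu)
      + \esum_(i in [set: I]) ((mu i * PE P i)%:E * HD P i)
  /\
  entropy_rate (eta_law P mu) (Amat P mu)
    = \esum_(j in [set: I]) (- ((1 - gamma) * (mu j * ln (mu j))))%:E
      + \esum_(i in [set: I]) \esum_(j in [set: I])
          (- (mu i * (P (inl i) (inl j) * ln (P (inl i) (inl j)))))%:E
      + \esum_(i in [set: I]) \esum_(d in [set: E])
          (- (mu i * (P (inl i) (inr d) * ln (P (inl i) (inr d)))))%:E.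
Proof.
(* The identities only use stochasticity of P and the quasi-stationarity of mu. *)
move=> _ HP _ _ _ _ Hmu gammaE _ mu_qsd; split.
- exact: entropy_rate_Amat_Kmat HP Hmu gammaE mu_qsd.
- exact: entropy_rate_Amat_explicit HP Hmu gammaE mu_qsd.
Qed.
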